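(* Let $S=\{s_1<\dots<s_{k_1}\}$ and $T=\{t_1<\dots<t_{k_2}\}$ be nonempty subsets of $\{1,\dots,n-1\}$, let $d=\gcd\{s+t: s\in S,t\in T\}$ and $d'=\gcd(s_1,d)$. For a positive integer $i$ let $P_i=\{\ell\in\mathcal{I}_n : \ell\equiv is_1\pmod d\}$, where $\mathcal{I}_n=\{-n+1,\dots,n-1\}$ (integers). Then for every positive integer $i$: (a) $P_i=P_{i+d/d'}$; (b) $P_i,\dots,P_{i-1+d/d'}$ are mutually disjoint; (c) if $i\ge2$, then $P_i=\{\ell\in\mathcal{I}_n : \ell-s_1\in P_{i-1}\text{ or }\ell+t_1\in P_{i-1}\}$. *)

From mathcomp Require Import all_boot all_order all_algebra.
Set Implicit Arguments. Unset Strict Implicit. Unset Printing Implicit Defensive.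
Import Order.TTheory GRing.Theory Num.Theory.

Definition gcd_sums (n : nat) (S T : {set 'I_n}) : nat :=
  \big[gcdn/0%N]_(s in S) \big[gcdn/0%N]_(t in T) (s + t)%N.

Definition In_int (n : nat) (l : int) : bool :=
  ((- (n%:Z) < l) && (l < n%:Z))%R.

Definition Pset (n d s1 i : nat) (l : int) : bool :=
  In_int n l && (l == (i * s1)%N%:Z %[mod d%:Z])%Z.

From mathcomp Require Import all_boot all_order all_algebra.
From mathcomp Require Import zify ring.
Set Implicit Arguments. Unset Strict Implicit. Unset Printing Implicit Defensive.
Import Order.TTheory GRing.Theory Num.Theory.

(* Everything rests on [d %| s1 + t1] and [d' = gcd(s1, d)]: the residues
   [i * s1 mod d] repeat with exact period [d / d'], because [d %| m * s1] iff
   [d %| m * d'] iff [d / d' %| m]; and a step [l -> l - s1] or [l -> l + t1]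
   changes [l] by [-s1] or by [-s1 + (s1 + t1)], both [-s1 mod d]. *)

Lemma dvdn_gcd_sums (n : nat) (S T : {set 'I_n}) (s t : 'I_n) :
  s \in S -> t \in T -> (gcd_sums S T %| s + t)%N.
Proof. by move=> sS tT; apply: (biggcdn_inf s sS); apply: (biggcdn_inf t tT). Qed.

Lemma In_int_shift (n s t : nat) (l : int) : (s < n)%N -> (t < n)%N ->
  In_int n l -> In_int n (l - s%:Z)%R || In_int n (l + t%:Z)%R.
Proof. by rewrite /In_int => s_lt t_lt /andP[]; lia. Qed.

Section MultiplesModulo.

Variables d a : nat.

Lemma muln_period_mod (i : nat) :
  ((i + d %/ gcdn a d) * a = i * a %[mod d])%N.
Proof.
rewrite mulnDl addnC.
have -> : (d %/ gcdn a d * a = a %/ gcdn a d * d)%N.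
  by rewrite -{2}(divnK (dvdn_gcdl a d)) mulnCA divnK ?dvdn_gcdr.
exact: modnMDl.
Qed.

Lemma period_dvdn_of_eq_mod (j k : nat) : (0 < d)%N -> (j <= k)%N ->
  (j * a = k * a %[mod d])%N -> (d %/ gcdn a d %| k - j)%N.
Proof.
move=> d_gt0 le_jk /eqP; rewrite eq_sym eqn_mod_dvd ?leq_mul2r ?le_jk ?orbT //.
rewrite -mulnBl => dvd_ka.
have dvd_kd : (d %| (k - j) * gcdn a d)%N.
  by rewrite muln_gcdr dvdn_gcd dvd_ka dvdn_mull.
have g_gt0 : (0 < gcdn a d)%N by rewrite gcdn_gt0 d_gt0 orbT.
by rewrite -(dvdn_pmul2r g_gt0) divnK ?dvdn_gcdr.
Qed.

End MultiplesModulo.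

Section Pset.

Variables n d a : nat.

Lemma Pset_eq_mod (i j : nat) :
  (i * a = j * a %[mod d])%N -> Pset n d a i =1 Pset n d a j.
Proof. by move=> eq_ij l; rewrite /Pset !modz_nat eq_ij. Qed.

Lemma Pset_period (i : nat) : Pset n d a (i + d %/ gcdn a d) =1 Pset n d a i.
Proof. exact/Pset_eq_mod/muln_period_mod. Qed.

Lemma eq_mod_of_Pset (j k : nat) (l : int) :
  Pset n d a j l -> Pset n d a k l -> (j * a = k * a %[mod d])%N.
Proof.
rewrite /Pset => /andP[_ /eqP lj] /andP[_ /eqP lk].
by apply/eqP; rewrite -eqz_nat -!modz_nat -lj -lk.
Qed.

Lemma Pset_disjoint (j k : nat) (l : int) : (0 < d)%N ->
  (j < k < j + d %/ gcdn a d)%N -> ~~ (Pset n d a j l && Pset n d a k l).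
Proof.
move=> d_gt0 /andP[lt_jk lt_k]; apply/negP => /andP[Pj Pk].
have := period_dvdn_of_eq_mod d_gt0 (ltnW lt_jk) (eq_mod_of_Pset Pj Pk).
by move/dvdn_leq; lia.
Qed.

Lemma Pset_succ (t i : nat) (l : int) :
  (a < n)%N -> (t < n)%N -> (d %| a + t)%N ->
  Pset n d a i.+1 l =
  In_int n l && (Pset n d a i (l - a%:Z)%R || Pset n d a i (l + t%:Z)%R).
Proof.
move=> a_lt t_lt dvd_at; rewrite /Pset !eqz_mod_dvd.
have -> : ((i * a)%N%:Z = (i.+1 * a)%N%:Z - a%:Z)%R by rewrite mulSn PoszD; ring.
have -> : (l - a%:Z - ((i.+1 * a)%N%:Z - a%:Z) = l - (i.+1 * a)%N%:Z)%R by ring.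
have -> : (l + t%:Z - ((i.+1 * a)%N%:Z - a%:Z)
          = l - (i.+1 * a)%N%:Z + (a + t)%N%:Z)%R by rewrite PoszD; ring.
have dvdz_at : (d%:Z %| (a + t)%N%:Z)%Z by rewrite dvdzE.
rewrite (rpredDr _ dvdz_at).
case: (d%:Z %| _)%Z; rewrite ?andbF ?andbT ?orbF //.
by apply/idP/idP => [l_in | /andP[]//]; rewrite l_in In_int_shift.
Qed.

End Pset.

Theorem lemma2p8 (n : nat) (S T : {set 'I_n}) (s1 t1 : 'I_n)
  (hS0 : forall s : 'I_n, s \in S -> (0 < s)%N)
  (hT0 : forall t : 'I_n, t \in T -> (0 < t)%N)
  (hs1 : s1 \in S) (hs1min : forall s : 'I_n, s \in S -> (s1 <= s)%N)
  (ht1 : t1 \in T) (ht1min : forall t : 'I_n, t \in T -> (t1 <= t)%N) :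
  let d := gcd_sums S T in
  let d' := gcdn s1 d in
  forall i : nat, (0 < i)%N ->
    (forall l : int, Pset n d s1 i l = Pset n d s1 (i + d %/ d') l)
 /\ (forall j k : nat, (i <= j)%N -> (j < k)%N -> (k <= i - 1 + d %/ d')%N ->
       forall l : int, ~~ (Pset n d s1 j l && Pset n d s1 k l))
 /\ ((2 <= i)%N -> forall l : int,
       Pset n d s1 i l =
       In_int n l && (Pset n d s1 (i - 1) (l - s1%:Z)%R
                      || Pset n d s1 (i - 1) (l + t1%:Z)%R)).
Proof.
move=> d d' i i_gt0.
have dvd_st : (d %| s1 + t1)%N by exact: dvdn_gcd_sums.
have d_gt0 : (0 < d)%N.
  by apply: dvdn_gt0 dvd_st; rewrite addn_gt0 hS0.
split; [|split].
- by move=> l; rewrite Pset_period.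
- move=> j k le_ij lt_jk le_k l; apply: Pset_disjoint => //.
  by rewrite lt_jk -/d'; lia.
- move=> i_ge2 l; rewrite -[in LHS](subnK (ltnW i_ge2)) addn1.
  exact: Pset_succ (ltn_ord s1) (ltn_ord t1) dvd_st.
Qed.
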